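(* Let $1<p_1<p_2<\infty$. Let $\mathbf{x},\mathbf{y}_1,\dots,\mathbf{y}_m\in \ell_{p_1}\cap \ell_{p_2}$ be such that $\mathbf{y}_1,\dots,\mathbf{y}_m$ are linearly independent and $\mathbf{x}\notin \mathbb{Y}=\mathrm{span}\{\mathbf{y}_1,\dots,\mathbf{y}_m\}$. Let $\mathbf{x_0}$ and $\mathbf{y_0}$ be the best approximations to $\mathbf{x}$ out of $\mathbb{Y}$ in $\ell_{p_1}$ and in $\ell_{p_2}$, respectively. Then $\mathrm{dist}_{p_1}(\mathbf{x},\mathbb{Y})=\mathrm{dist}_{p_2}(\mathbf{x},\mathbb{Y})$ if and only if there exist a non-zero $\lambda\in \mathbb{R}$ and $j\in \mathbb{N}$ such that $\mathbf{x}-\mathbf{x_0}=\mathbf{x}-\mathbf{y_0}=\lambda e_j$ and $\mathbb{Y}\subseteq \{(\lambda_1,\lambda_2,\dots)\in \ell_{p_1}\cap \ell_{p_2}: \lambda_j=0\}$.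
   Context: $\ell_p$ is the real sequence space with norm $\|(x_k)\|_p=(\sum_k|x_k|^p)^{1/p}$; $e_j$ is the sequence with $1$ in position $j$ and $0$ elsewhere. $\mathrm{dist}_p(\mathbf{x},\mathbb{Y})=\inf_{y\in\mathbb{Y}}\|\mathbf{x}-y\|_p$. For $1<p<\infty$, best approximations from finite-dimensional subspaces of $\ell_p$ exist and are unique. *)

From Stdlib Require Import Reals Lra.
From Coquelicot Require Import Coquelicot.
Open Scope R_scope.

(* a ^ p for a >= 0 and real p > 0, with the convention 0 ^ p = 0. *)
Definition rpow (a p : R) : R := if Rle_dec a 0 then 0 else Rpower a p.

Definition seqR := nat -> R.

Definition in_lp (p : R) (x : seqR) : Prop :=
  ex_series (fun k => rpow (Rabs (x k)) p).

(* the l_p norm (meaningful for x in l_p) *)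
Definition lp_norm (p : R) (x : seqR) : R :=
  rpow (Series (fun k => rpow (Rabs (x k)) p)) (1 / p).

Definition seq_sub (x y : seqR) : seqR := fun k => x k - y k.

Definition e (j : nat) : seqR := fun k => if Nat.eqb k j then 1 else 0.

Fixpoint lincomb (m : nat) (c : nat -> R) (y : nat -> seqR) : seqR :=
  match m with
  | O => fun _ => 0
  | S m' => fun k => lincomb m' c y k + c m' * y m' k
  end.

Definition span (m : nat) (y : nat -> seqR) (z : seqR) : Prop :=
  exists c : nat -> R, z = lincomb m c y.

Definition lin_indep (m : nat) (y : nat -> seqR) : Prop :=
  forall c : nat -> R, lincomb m c y = (fun _ => 0) -> forall i, (i < m)%nat -> c i = 0.

Definition dist_p (p : R) (x : seqR) (Y : seqR -> Prop) : Rbar :=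
  Glb_Rbar (fun r => exists z, Y z /\ r = lp_norm p (seq_sub x z)).

Definition best_approx (p : R) (x : seqR) (Y : seqR -> Prop) (x0 : seqR) : Prop :=
  Y x0 /\ forall z, Y z -> lp_norm p (seq_sub x x0) <= lp_norm p (seq_sub x z).

(* For u in l_p1 and p1 < p2 one has ||u||_p2 <= ||u||_p1: with a_k = |u_k|^p1 and
   q = p2/p1 > 1, a_k^q <= a_k (sum a)^(q-1), and equality forces every non-zero a_k
   to equal sum a, i.e. u has a single non-zero coordinate.  If the two distances
   agree, the chain dist_p2 <= ||x - x0||_p2 <= ||x - x0||_p1 = dist_p2 is an equality,
   so x - x0 = lam e_j.  Were z_j <> 0 for some z in Y, moving x0 by a small multiple
   s of z would lower |lam|^p1 by order s and raise the other coordinates only by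
   order s^p1, against the optimality of x0.  So Y vanishes at j, x - y has j-th
   coordinate lam for all y in Y, and ||x - y0||_p2 <= |lam| forces x - y0 = lam e_j. *)

From Stdlib Require Import Reals Lra Classical FunctionalExtensionality.
From Coquelicot Require Import Coquelicot.

Open Scope R_scope.

Lemma rpow_nonneg a p : 0 <= rpow a p.
Proof.
  unfold rpow; destruct (Rle_dec a 0); [lra | left; apply exp_pos].
Qed.

Lemma rpow_pos a p : 0 < a -> 0 < rpow a p.
Proof.
  intro Ha; unfold rpow; destruct (Rle_dec a 0); [lra | apply exp_pos].
Qed.

Lemma rpow_0_l p : rpow 0 p = 0.
Proof. unfold rpow; destruct (Rle_dec 0 0); lra. Qed.

Lemma rpow_1_l p : rpow 1 p = 1.
Proof.
  unfold rpow; destruct (Rle_dec 1 0); [lra|].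
  unfold Rpower; rewrite ln_1, Rmult_0_r; apply exp_0.
Qed.

Lemma rpow_1_r a : 0 <= a -> rpow a 1 = a.
Proof.
  intro Ha; unfold rpow; destruct (Rle_dec a 0); [lra | apply Rpower_1; lra].
Qed.

Lemma rpow_abs_eq_0 r p : rpow (Rabs r) p = 0 -> r = 0.
Proof.
  intro H; apply Rabs_eq_0.
  destruct (Rle_dec (Rabs r) 0); [pose proof (Rabs_pos r); lra|].
  pose proof (rpow_pos (Rabs r) p); lra.
Qed.

Lemma rpow_plus a p q : rpow a (p + q) = rpow a p * rpow a q.
Proof. unfold rpow; destruct (Rle_dec a 0); [ring | apply Rpower_plus]. Qed.

Lemma rpow_mul_pred a p : 0 <= a -> a * rpow a (p - 1) = rpow a p.
Proof.
  intro Ha; rewrite <- (rpow_1_r a) at 1 by auto; rewrite <- rpow_plus; f_equal; ring.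
Qed.

Lemma rpow_rpow a p q : 0 <= a -> rpow (rpow a p) q = rpow a (p * q).
Proof.
  intro Ha; unfold rpow at 2 3; destruct (Rle_dec a 0); [apply rpow_0_l|].
  unfold rpow; destruct (Rle_dec (Rpower a p) 0).
  - pose proof (exp_pos (p * ln a)); unfold Rpower in *; lra.
  - apply Rpower_mult.
Qed.

Lemma rpow_rpow_inv a p : 0 <= a -> 0 < p -> rpow (rpow a p) (1 / p) = a.
Proof.
  intros Ha Hp; rewrite rpow_rpow by auto.
  replace (p * (1 / p)) with 1 by (field; lra); apply rpow_1_r; auto.
Qed.

Lemma rpow_mult_distr a b p : 0 <= a -> 0 <= b -> rpow (a * b) p = rpow a p * rpow b p.
Proof.
  intros Ha Hb.
  destruct (Req_dec a 0) as [->|Ha0]; [rewrite Rmult_0_l, !rpow_0_l; ring|].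
  destruct (Req_dec b 0) as [->|Hb0]; [rewrite Rmult_0_r, !rpow_0_l; ring|].
  unfold rpow; destruct (Rle_dec (a * b) 0); [nra|].
  destruct (Rle_dec a 0); [lra|]; destruct (Rle_dec b 0); [lra|].
  symmetry; apply Rpower_mult_distr; lra.
Qed.

Lemma rpow_lt_compat a b p : 0 <= a -> a < b -> 0 < p -> rpow a p < rpow b p.
Proof.
  intros Ha Hab Hp; unfold rpow.
  destruct (Rle_dec b 0); [lra|]; destruct (Rle_dec a 0).
  - apply exp_pos.
  - apply Rlt_Rpower_l; lra.
Qed.

Lemma rpow_le_compat a b p : 0 <= a -> a <= b -> 0 < p -> rpow a p <= rpow b p.
Proof.
  intros Ha Hab Hp; destruct (Req_dec a b) as [->|]; [lra|].
  left; apply rpow_lt_compat; lra.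
Qed.

Lemma rpow_le_reg a b p : 0 <= a -> 0 <= b -> 0 < p -> rpow a p <= rpow b p -> a <= b.
Proof.
  intros Ha Hb Hp H; destruct (Rle_lt_dec a b); auto.
  pose proof (rpow_lt_compat b a p); lra.
Qed.

Lemma rpow_inj a b p : 0 <= a -> 0 <= b -> 0 < p -> rpow a p = rpow b p -> a = b.
Proof. intros; apply Rle_antisym; eapply rpow_le_reg; eauto; lra. Qed.

Lemma rpow_le_self s p : 0 <= s <= 1 -> 1 < p -> rpow s p <= s.
Proof.
  intros Hs Hp; rewrite <- rpow_mul_pred by lra.
  assert (rpow s (p - 1) <= 1) by (rewrite <- (rpow_1_l (p - 1)) at 2; apply rpow_le_compat; lra).
  pose proof (rpow_nonneg s (p - 1)); nra.
Qed.

Lemma rpow_abs_add_le a b p : 0 < p ->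
  rpow (Rabs (a + b)) p <= rpow 2 p * (rpow (Rabs a) p + rpow (Rabs b) p).
Proof.
  intro Hp.
  pose proof (Rmax_l (Rabs a) (Rabs b)); pose proof (Rmax_r (Rabs a) (Rabs b)).
  pose proof (Rabs_triang a b); pose proof (Rabs_pos a).
  set (M := Rmax (Rabs a) (Rabs b)) in *.
  apply Rle_trans with (rpow (2 * M) p); [apply rpow_le_compat; [apply Rabs_pos|lra|lra]|].
  rewrite rpow_mult_distr by lra.
  apply Rmult_le_compat_l; [apply rpow_nonneg|].
  pose proof (rpow_nonneg (Rabs a) p); pose proof (rpow_nonneg (Rabs b) p).
  unfold M, Rmax; destruct (Rle_dec (Rabs a) (Rabs b)); lra.
Qed.

Lemma is_series_0 : is_series (fun _ : nat => 0) 0.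
Proof.
  eapply filterlim_ext; [|apply filterlim_const].
  intro n; simpl; rewrite sum_n_const; ring.
Qed.

Lemma is_series_single j (c : R) : is_series (fun k => if Nat.eqb k j then c else 0) c.
Proof.
  revert c; induction j as [|j IH]; intro c; apply is_series_decr_1; simpl.
  - match goal with |- is_series _ ?l => replace l with 0 by (change (0 = c + - c); ring) end.
    apply is_series_0.
  - match goal with |- is_series _ ?l => replace l with c by (change (c = c + - 0); ring) end.
    apply IH.
Qed.

Lemma Series_single j (c : R) : Series (fun k => if Nat.eqb k j then c else 0) = c.
Proof. apply is_series_unique, is_series_single. Qed.

Lemma ex_series_single j (c : R) : ex_series (fun k => if Nat.eqb k j then c else 0).
Proof. eexists; apply is_series_single. Qed.

Lemma ex_series_nonneg_le a b : (forall n, 0 <= a n <= b n) -> ex_series b -> ex_series a.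
Proof.
  intros Hab Hb; apply (@ex_series_le R_AbsRing R_CompleteNormedModule a b); auto.
  intro n; specialize (Hab n); change norm with Rabs; simpl; rewrite Rabs_pos_eq; lra.
Qed.

Lemma Series_ge_two_terms a j k : (forall n, 0 <= a n) -> ex_series a -> j <> k ->
  a j + a k <= Series a.
Proof.
  intros Ha Hex Hjk.
  rewrite <- (Series_single j (a j)), <- (Series_single k (a k)).
  rewrite <- Series_plus by apply ex_series_single.
  apply Series_le; auto; intro n; pose proof (Ha n).
  destruct (Nat.eqb_spec n j), (Nat.eqb_spec n k); subst; try congruence; lra.
Qed.

Lemma Series_ge_term a j : (forall n, 0 <= a n) -> ex_series a -> a j <= Series a.
Proof.
  intros Ha Hex; pose proof (Series_ge_two_terms a j (S j) Ha Hex (n_Sn j)).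
  specialize (Ha (S j)); lra.
Qed.

Lemma Series_nonneg a : (forall n, 0 <= a n) -> ex_series a -> 0 <= Series a.
Proof. intros Ha Hex; pose proof (Series_ge_term a O Ha Hex); specialize (Ha O); lra. Qed.

Lemma Series_le_eq a b : (forall n, a n <= b n) -> ex_series a -> ex_series b ->
  Series b <= Series a -> forall n, a n = b n.
Proof.
  intros Hab Ha Hb HS n.
  assert (Hd : ex_series (fun k => b k - a k)) by apply (ex_series_minus b a Hb Ha).
  pose proof (Series_ge_term (fun k => b k - a k) n) as H.
  rewrite Series_minus in H by auto.
  assert (Hpos : forall k, 0 <= b k - a k) by (intro k; specialize (Hab k); lra).
  specialize (H Hpos Hd); specialize (Hab n); lra.
Qed.

Lemma rpow_le_mul_Series a q n : 1 < q -> (forall k, 0 <= a k) -> ex_series a ->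
  rpow (a n) q <= a n * rpow (Series a) (q - 1).
Proof.
  intros Hq Ha Hex.
  rewrite <- rpow_mul_pred by auto.
  apply Rmult_le_compat_l; auto.
  apply rpow_le_compat; auto; [apply Series_ge_term; auto | lra].
Qed.

Lemma Series_rpow_le a q : 1 < q -> (forall n, 0 <= a n) -> ex_series a ->
  Series (fun n => rpow (a n) q) <= rpow (Series a) q.
Proof.
  intros Hq Ha Hex.
  rewrite <- (rpow_mul_pred (Series a)) by (apply Series_nonneg; auto).
  rewrite <- Series_scal_r; apply Series_le.
  - intro n; split; [apply rpow_nonneg | apply rpow_le_mul_Series; auto].
  - apply ex_series_scal_r, Hex.
Qed.

Lemma Series_rpow_eq_single a q j : 1 < q -> (forall n, 0 <= a n) -> ex_series a ->
  ex_series (fun n => rpow (a n) q) ->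
  rpow (Series a) q <= Series (fun n => rpow (a n) q) ->
  0 < a j -> forall k, k <> j -> a k = 0.
Proof.
  intros Hq Ha Hex Hexq Heq Hj k Hkj.
  set (S := Series a) in *.
  assert (HS : 0 <= S) by (apply Series_nonneg; auto).
  assert (Hterm : forall n, rpow (a n) q = a n * rpow S (q - 1)).
  { apply Series_le_eq; auto.
    - intro n; apply rpow_le_mul_Series; auto.
    - apply ex_series_scal_r, Hex.
    - rewrite Series_scal_r; fold S.
      rewrite rpow_mul_pred; auto. }
  assert (Hfull : forall n, 0 < a n -> a n = S).
  { intros n Hn; apply (rpow_inj _ _ (q - 1)); auto; [lra|].
    apply (Rmult_eq_reg_l (a n)); [|lra].
    rewrite <- (Hterm n), rpow_mul_pred; auto. }
  destruct (Ha k) as [Hk|Hk]; auto.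
  pose proof (Series_ge_two_terms a j k Ha Hex (not_eq_sym Hkj)) as Htwo.
  fold S in Htwo; rewrite (Hfull j Hj), (Hfull k Hk) in Htwo.
  pose proof (Hfull j Hj); lra.
Qed.

Lemma ex_series_rpow a q : 1 < q -> (forall n, 0 <= a n) -> ex_series a ->
  ex_series (fun n => rpow (a n) q).
Proof.
  intros Hq Ha Hex; apply ex_series_nonneg_le with (fun n => a n * rpow (Series a) (q - 1)).
  - intro n; split; [apply rpow_nonneg | apply rpow_le_mul_Series; auto].
  - apply ex_series_scal_r, Hex.
Qed.

Definition lp_sum (p : R) (x : seqR) : R := Series (fun k => rpow (Rabs (x k)) p).

Lemma lp_sum_nonneg p x : in_lp p x -> 0 <= lp_sum p x.
Proof. intro Hx; apply Series_nonneg; [intro; apply rpow_nonneg | exact Hx]. Qed.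

Lemma lp_sum_le_of_lp_norm_le p x y : 0 < p -> in_lp p x -> in_lp p y ->
  lp_norm p x <= lp_norm p y -> lp_sum p x <= lp_sum p y.
Proof.
  intros Hp Hx Hy H; apply (rpow_le_reg _ _ (1 / p)); auto using lp_sum_nonneg.
  apply Rdiv_lt_0_compat; lra.
Qed.

Lemma in_lp_0 p : in_lp p (fun _ => 0).
Proof.
  exists 0; eapply is_series_ext; [|apply is_series_0].
  intro k; simpl; rewrite Rabs_R0, rpow_0_l; reflexivity.
Qed.

Lemma in_lp_lin p u a v : 0 < p -> in_lp p u -> in_lp p v ->
  in_lp p (fun k => u k + a * v k).
Proof.
  intros Hp Hu Hv; unfold in_lp.
  apply ex_series_nonneg_le with
    (fun k => (rpow (Rabs (u k)) p + rpow (Rabs (v k)) p * rpow (Rabs a) p) * rpow 2 p).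
  - intro k; split; [apply rpow_nonneg|].
    rewrite <- rpow_mult_distr, <- Rabs_mult, (Rmult_comm (v k)), (Rmult_comm _ (rpow 2 p))
      by apply Rabs_pos.
    apply rpow_abs_add_le; auto.
  - apply ex_series_scal_r, (ex_series_plus _ _ Hu), ex_series_scal_r, Hv.
Qed.

Lemma in_lp_sub p x z : 0 < p -> in_lp p x -> in_lp p z -> in_lp p (seq_sub x z).
Proof.
  intros Hp Hx Hz.
  replace (seq_sub x z) with (fun k => x k + (-1) * z k)
    by (apply functional_extensionality; intro k; unfold seq_sub; ring).
  apply in_lp_lin; auto.
Qed.

Lemma lincomb_lin m c d t y k :
  lincomb m (fun i => c i + t * d i) y k = lincomb m c y k + t * lincomb m d y k.
Proof. induction m as [|m IH]; simpl; [|rewrite IH]; ring. Qed.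

Lemma span_lin m y z1 z2 t : span m y z1 -> span m y z2 ->
  span m y (fun k => z1 k + t * z2 k).
Proof.
  intros [c ->] [d ->]; exists (fun i => c i + t * d i).
  apply functional_extensionality; intro k; rewrite lincomb_lin; reflexivity.
Qed.

Lemma in_lp_span p m y z : 0 < p -> (forall i, (i < m)%nat -> in_lp p (y i)) ->
  span m y z -> in_lp p z.
Proof.
  intros Hp Hy [c ->]; induction m as [|m IH]; simpl.
  - apply in_lp_0.
  - apply in_lp_lin; auto.
Qed.

Lemma rpow_abs_scal_e p lam j k :
  rpow (Rabs (lam * e j k)) p = if Nat.eqb k j then rpow (Rabs lam) p else 0.
Proof.
  unfold e; destruct (Nat.eqb k j); [rewrite Rmult_1_r | rewrite Rmult_0_r, Rabs_R0, rpow_0_l];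
    reflexivity.
Qed.

Lemma in_lp_scal_e p lam j : in_lp p (fun k => lam * e j k).
Proof.
  unfold in_lp; rewrite (functional_extensionality _ _ (rpow_abs_scal_e p lam j)).
  apply ex_series_single.
Qed.

Lemma lp_sum_scal_e p lam j : lp_sum p (fun k => lam * e j k) = rpow (Rabs lam) p.
Proof. unfold lp_sum; rewrite (Series_ext _ _ (rpow_abs_scal_e p lam j)); apply Series_single. Qed.

Lemma lp_norm_scal_e p lam j : 0 < p -> lp_norm p (fun k => lam * e j k) = Rabs lam.
Proof.
  intro Hp; change (rpow (lp_sum p (fun k => lam * e j k)) (1 / p) = Rabs lam).
  rewrite lp_sum_scal_e; apply rpow_rpow_inv; auto using Rabs_pos.
Qed.

Lemma spike_ext v j : (forall k, k <> j -> v k = 0) -> v = (fun k => v j * e j k).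
Proof.
  intro Hv; apply functional_extensionality; intro k; unfold e.
  destruct (Nat.eqb_spec k j) as [->|Hkj]; [ring | rewrite Hv; auto; ring].
Qed.

Lemma spike_of_lp_sum_le p v j : in_lp p v -> lp_sum p v <= rpow (Rabs (v j)) p ->
  v = (fun k => v j * e j k).
Proof.
  intros Hv Hle; apply spike_ext; intros k Hkj.
  pose proof (Series_ge_two_terms _ j k (fun n => rpow_nonneg _ p) Hv (not_eq_sym Hkj)).
  pose proof (rpow_nonneg (Rabs (v k)) p).
  apply (rpow_abs_eq_0 _ p); unfold lp_sum in Hle; lra.
Qed.

Section LpInclusion.

Variables (p1 p2 : R) (u : seqR).
Hypothesis (Hp1 : 0 < p1) (Hp12 : p1 < p2) (Hu1 : in_lp p1 u).

Let a k := rpow (Rabs (u k)) p1.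

Let a_nonneg k : 0 <= a k.
Proof. apply rpow_nonneg. Qed.

Let q_gt_1 : 1 < p2 / p1.
Proof. apply (Rmult_lt_reg_r p1); auto; unfold Rdiv; rewrite Rmult_assoc, Rinv_l; lra. Qed.

Let rpow_a k : rpow (a k) (p2 / p1) = rpow (Rabs (u k)) p2.
Proof. unfold a; rewrite rpow_rpow by apply Rabs_pos; f_equal; field; lra. Qed.

Let lp_norm_ratio : lp_norm p1 u = rpow (rpow (lp_sum p1 u) (p2 / p1)) (1 / p2).
Proof.
  rewrite rpow_rpow by (apply lp_sum_nonneg; auto).
  change (rpow (lp_sum p1 u) (1 / p1) = rpow (lp_sum p1 u) (p2 / p1 * (1 / p2))).
  f_equal; field; lra.
Qed.

Lemma in_lp_of_lt : in_lp p2 u.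
Proof. apply (ex_series_ext _ _ rpow_a), ex_series_rpow; auto. Qed.

Let lp_sum_le : lp_sum p2 u <= rpow (lp_sum p1 u) (p2 / p1).
Proof.
  unfold lp_sum; rewrite <- (Series_ext _ _ rpow_a); apply Series_rpow_le; auto.
Qed.

Lemma lp_norm_le_of_lt : lp_norm p2 u <= lp_norm p1 u.
Proof.
  rewrite lp_norm_ratio; apply rpow_le_compat.
  - apply lp_sum_nonneg, in_lp_of_lt.
  - apply lp_sum_le.
  - apply Rdiv_lt_0_compat; lra.
Qed.

Lemma lp_norm_eq_spike j : lp_norm p1 u = lp_norm p2 u -> u j <> 0 ->
  u = (fun k => u j * e j k).
Proof.
  intros Heq Hj; apply spike_ext; intros k Hkj.
  apply (rpow_abs_eq_0 _ p1).
  apply (Series_rpow_eq_single a (p2 / p1) j); auto.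
  - apply (ex_series_ext _ _ (fun k => eq_sym (rpow_a k))), in_lp_of_lt.
  - rewrite (Series_ext _ _ rpow_a); fold (lp_sum p2 u); right.
    apply (rpow_inj _ _ (1 / p2)).
    + apply rpow_nonneg.
    + apply lp_sum_nonneg, in_lp_of_lt.
    + apply Rdiv_lt_0_compat; lra.
    + change (rpow (rpow (lp_sum p1 u) (p2 / p1)) (1 / p2) = lp_norm p2 u).
      rewrite <- lp_norm_ratio; exact Heq.
  - apply rpow_pos, Rabs_pos_lt, Hj.
Qed.

End LpInclusion.

Lemma exists_perturbation_gain p L C : 1 < p -> 0 < L -> 0 <= C ->
  exists s, 0 < s < 1 /\ rpow (1 - s) p * L + rpow s p * C < L.
Proof.
  intros Hp HL HC.
  set (b := L / (C + 1)).
  assert (Hb : 0 < b) by (apply Rdiv_lt_0_compat; lra).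
  assert (HbC : b * C < L).
  { apply (Rmult_lt_reg_r (C + 1)); [lra|].
    replace (b * C * (C + 1)) with (L * C) by (unfold b; field; lra); nra. }
  set (s := Rmin (1 / 2) (rpow b (1 / (p - 1)))).
  assert (Hs : 0 < s <= 1 / 2).
  { split; [apply Rmin_pos; [lra | apply rpow_pos; auto] | apply Rmin_l]. }
  assert (Hsb : rpow s (p - 1) <= b).
  { apply Rle_trans with (rpow (rpow b (1 / (p - 1))) (p - 1)).
    - apply rpow_le_compat; [lra | apply Rmin_r | lra].
    - rewrite rpow_rpow by lra.
      replace (1 / (p - 1) * (p - 1)) with 1 by (field; lra).
      rewrite rpow_1_r; lra. }
  (* The gain (1 - (1-s)^p) L >= s L beats the loss s^p C = s (s^(p-1) C) once s^(p-1) C < L. *)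
  exists s; split; [lra|].
  pose proof (rpow_nonneg s (p - 1)).
  rewrite <- (rpow_mul_pred s) by lra.
  assert (rpow (1 - s) p <= 1 - s) by (apply rpow_le_self; lra).
  assert (rpow s (p - 1) * C <= b * C) by (apply Rmult_le_compat_r; auto).
  nra.
Qed.

Lemma lp_sum_spike_add_le p lam j t z : in_lp p z ->
  lp_sum p (fun k => lam * e j k + t * z k) <=
  rpow (Rabs (lam + t * z j)) p + rpow (Rabs t) p * lp_sum p z.
Proof.
  intro Hz; rewrite (Rmult_comm _ (lp_sum p z)); unfold lp_sum.
  rewrite <- (Series_single j (rpow (Rabs (lam + t * z j)) p)), <- Series_scal_r,
    <- Series_plus by (apply ex_series_single || apply ex_series_scal_r, Hz).
  apply Series_le.
  - intro k; split; [apply rpow_nonneg|]; unfold e.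
    pose proof (rpow_nonneg (Rabs (z k)) p); pose proof (rpow_nonneg (Rabs t) p).
    destruct (Nat.eqb_spec k j) as [->|]; [rewrite Rmult_1_r; nra|].
    rewrite Rmult_0_r, Rplus_0_l, Rabs_mult, rpow_mult_distr by apply Rabs_pos; lra.
  - apply (ex_series_plus _ _ (ex_series_single _ _)), ex_series_scal_r, Hz.
Qed.

Lemma best_approx_spike_coord p m y x x0 lam j z : 1 < p ->
  (forall i, (i < m)%nat -> in_lp p (y i)) ->
  best_approx p x (span m y) x0 -> seq_sub x x0 = (fun k => lam * e j k) -> lam <> 0 ->
  span m y z -> z j = 0.
Proof.
  intros Hp Hy [Hx0 Hbest] Hu Hlam Hz.
  destruct (Req_dec (z j) 0) as [|Hzj]; [assumption | exfalso].
  assert (Hzp : in_lp p z) by (apply (in_lp_span p m y); auto; lra).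
  set (L := rpow (Rabs lam) p).
  set (C := rpow (Rabs (lam / z j)) p * lp_sum p z).
  destruct (exists_perturbation_gain p L C) as [s [Hs Hgain]]; auto.
  { apply rpow_pos, Rabs_pos_lt; auto. }
  { apply Rmult_le_pos; [apply rpow_nonneg | apply lp_sum_nonneg; auto]. }
  set (t := - (s * (lam / z j))).
  set (w := fun k => lam * e j k + t * z k).
  assert (Hw : w = seq_sub x (fun k => x0 k + - t * z k)).
  { apply functional_extensionality; intro k; pose proof (equal_f Hu k).
    unfold w, seq_sub in *; lra. }
  assert (Hlow : L <= lp_sum p w).
  { unfold L; rewrite <- (lp_sum_scal_e p lam j).
    apply lp_sum_le_of_lp_norm_le; [lra | apply in_lp_scal_e | |].
    - apply (in_lp_lin p (fun k => lam * e j k)); [lra | apply in_lp_scal_e | exact Hzp].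
    - rewrite <- Hu, Hw; apply Hbest, span_lin; auto. }
  assert (Hup : lp_sum p w <= rpow (1 - s) p * L + rpow s p * C).
  { eapply Rle_trans; [apply lp_sum_spike_add_le; auto|].
    replace (lam + t * z j) with ((1 - s) * lam) by (unfold t; field; auto).
    replace (Rabs t) with (s * Rabs (lam / z j))
      by (unfold t; rewrite Rabs_Ropp, Rabs_mult, (Rabs_pos_eq s); lra).
    rewrite Rabs_mult, (Rabs_pos_eq (1 - s)), !rpow_mult_distr by (apply Rabs_pos || lra).
    unfold L, C; right; ring. }
  lra.
Qed.

Lemma best_approx_spike_unique p m y x x0 y0 lam j : 0 < p ->
  in_lp p (seq_sub x y0) -> best_approx p x (span m y) y0 -> span m y x0 ->
  seq_sub x x0 = (fun k => lam * e j k) -> (forall z, span m y z -> z j = 0) ->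
  seq_sub x y0 = (fun k => lam * e j k).
Proof.
  intros Hp Hv [Hy0 Hbest] Hx0 Hu Hperp.
  assert (Hvj : seq_sub x y0 j = lam).
  { pose proof (Hperp _ (span_lin m y x0 y0 (-1) Hx0 Hy0)); pose proof (equal_f Hu j).
    unfold seq_sub, e in *; rewrite Nat.eqb_refl in *; lra. }
  assert (Hle : lp_sum p (seq_sub x y0) <= rpow (Rabs (seq_sub x y0 j)) p).
  { rewrite Hvj, <- (lp_sum_scal_e p lam j), <- Hu.
    apply lp_sum_le_of_lp_norm_le; [exact Hp | exact Hv | rewrite Hu; apply in_lp_scal_e |].
    apply Hbest, Hx0. }
  rewrite (spike_of_lp_sum_le p _ j Hv Hle), Hvj; reflexivity.
Qed.

Lemma seq_sub_coord_ne0 (Y : seqR -> Prop) x x0 : Y x0 -> ~ Y x ->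
  exists j, seq_sub x x0 j <> 0.
Proof.
  intros Hx0 Hx; apply not_all_ex_not; intro H0; apply Hx.
  replace x with x0; [exact Hx0|].
  apply functional_extensionality; intro k; specialize (H0 k); unfold seq_sub in H0; lra.
Qed.

Lemma dist_p_best_approx p x Y x0 : best_approx p x Y x0 ->
  dist_p p x Y = Finite (lp_norm p (seq_sub x x0)).
Proof.
  intros [Hx0 Hbest]; apply is_glb_Rbar_unique; split.
  - intros r [z [Hz ->]]; apply Hbest, Hz.
  - intros b Hb; apply Hb; exists x0; split; auto.
Qed.

Theorem theorem5p10 (p1 p2 : R) (m : nat) (x : seqR) (y : nat -> seqR)
    (x0 y0 : seqR) :
  1 < p1 -> p1 < p2 ->
  in_lp p1 x -> in_lp p2 x ->
  (forall i, (i < m)%nat -> in_lp p1 (y i) /\ in_lp p2 (y i)) ->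
  lin_indep m y ->
  ~ span m y x ->
  best_approx p1 x (span m y) x0 ->
  best_approx p2 x (span m y) y0 ->
  (dist_p p1 x (span m y) = dist_p p2 x (span m y) <->
   exists (lam : R) (j : nat), lam <> 0 /\
     seq_sub x x0 = (fun k => lam * e j k) /\
     seq_sub x y0 = (fun k => lam * e j k) /\
     (forall z, span m y z -> in_lp p1 z /\ in_lp p2 z /\ z j = 0)).
Proof.
  intros Hp1 Hp12 Hx1 Hx2 Hy _ Hnx Hb1 Hb2.
  assert (Hy1 : forall i, (i < m)%nat -> in_lp p1 (y i)) by (intros i Hi; apply Hy, Hi).
  assert (Hy2 : forall i, (i < m)%nat -> in_lp p2 (y i)) by (intros i Hi; apply Hy, Hi).
  rewrite (dist_p_best_approx _ _ _ _ Hb1), (dist_p_best_approx _ _ _ _ Hb2); split.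
  - intro Heq; injection Heq as Heq.
    assert (Hu1 : in_lp p1 (seq_sub x x0))
      by (apply in_lp_sub, (in_lp_span p1 m y), (proj1 Hb1); auto; lra).
    assert (Hv2 : in_lp p2 (seq_sub x y0))
      by (apply in_lp_sub, (in_lp_span p2 m y), (proj1 Hb2); auto; lra).
    assert (Hnorm : lp_norm p1 (seq_sub x x0) = lp_norm p2 (seq_sub x x0)).
    { pose proof (proj2 Hb2 _ (proj1 Hb1)).
      pose proof (lp_norm_le_of_lt p1 p2 _ ltac:(lra) Hp12 Hu1); lra. }
    destruct (seq_sub_coord_ne0 _ x x0 (proj1 Hb1) Hnx) as [j Hj].
    pose proof (lp_norm_eq_spike p1 p2 _ ltac:(lra) Hp12 Hu1 j Hnorm Hj) as Hu.
    pose proof (fun z => best_approx_spike_coord p1 m y x x0 _ j z Hp1 Hy1 Hb1 Hu Hj) as Hperp.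
    exists (seq_sub x x0 j), j; repeat split; auto.
    + apply (best_approx_spike_unique p2 m y x x0); auto; [lra | apply Hb1].
    + apply (in_lp_span p1 m y); auto; lra.
    + apply (in_lp_span p2 m y); auto; lra.
  - intros [lam [j [_ [Hu [Hv _]]]]]; rewrite Hu, Hv, !lp_norm_scal_e by lra; reflexivity.
Qed.
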